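(* Let $\Gamma$ be any finite simplicial graph. If $(x,y\mid z)$ is a SIL with $x\le z$, then $(z,y\mid x)$ is also a SIL.
   Context: $\mathrm{lk}(u)$ = neighbours of $u$, $\mathrm{st}(u)=\mathrm{lk}(u)\cup\{u\}$; $u\le v$ iff $\mathrm{lk}(u)\subseteq\mathrm{st}(v)$. A SIL is a triple $(x,y\mid z)$ of pairwise non-adjacent vertices such that the connected component of $\Gamma\setminus(\mathrm{lk}(x)\cap\mathrm{lk}(y))$ containing $z$ contains neither $x$ nor $y$. *)

From mathcomp Require Import all_boot.
Set Implicit Arguments. Unset Strict Implicit. Unset Printing Implicit Defensive.

Definition simple_graph (T : finType) (e : rel T) : Prop :=
  symmetric e /\ irreflexive e.

Definition lk (T : finType) (e : rel T) (u : T) : {set T} := [set v | e u v].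
Definition st (T : finType) (e : rel T) (u : T) : {set T} := u |: lk e u.

Definition vle (T : finType) (e : rel T) (u v : T) : bool :=
  lk e u \subset st e v.

Definition del_rel (T : finType) (e : rel T) (S : {set T}) : rel T :=
  [rel a b | [&& e a b, a \notin S & b \notin S]].

(* the connected component of Γ \ S containing z (empty if z ∈ S) *)
Definition comp_of (T : finType) (e : rel T) (S : {set T}) (z : T) : {set T} :=
  [set w | [&& z \notin S, w \notin S & connect (del_rel e S) z w]].

Definition SIL (T : finType) (e : rel T) (x y z : T) : Prop :=
  [/\ x != y, x != z, y != z,
      [/\ ~~ e x y, ~~ e x z & ~~ e y z] &
      let C := comp_of e (lk e x :&: lk e y) z in
      x \notin C /\ y \notin C].

From mathcomp Require Import all_boot.
Set Implicit Arguments. Unset Strict Implicit. Unset Printing Implicit Defensive.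

(* Every neighbour v of x lies in lk z, since lk x is inside st z and x, z are
   not adjacent; and v lies in lk y, for otherwise z - v - x would join z to x
   in the complement of lk x ∩ lk y.  So x is isolated once lk z ∩ lk y is
   deleted, and its component there is {x}, which avoids z and y. *)

Section Components.

Variables (T : finType) (e : rel T).

Lemma comp_of_self (S : {set T}) (z : T) : z \notin S -> z \in comp_of e S z.
Proof. by move=> zS; rewrite inE zS /= connect0. Qed.

Lemma comp_of_edge (S : {set T}) (z w u : T) :
  w \in comp_of e S z -> e w u -> u \notin S -> u \in comp_of e S z.
Proof.
rewrite !inE => /and3P [zS wS zw] ewu uS; rewrite zS uS /=.
by apply: connect_trans zw (connect1 _); rewrite /del_rel /= ewu wS uS.
Qed.

Lemma comp_of_sub1 (S : {set T}) (z : T) :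
  lk e z \subset S -> comp_of e S z \subset [set z].
Proof.
move=> lkS; apply/subsetP => w; rewrite !inE => /and3P [_ _ /connectP [[|v p]]].
  by move=> _ ->.
rewrite /= => /andP [/and3P [ezv _ vS] _] _.
by move: vS; rewrite (subsetP lkS) // inE.
Qed.

Hypotheses (esym : symmetric e) (eirr : irreflexive e).

Lemma SIL_lk_subset (x y z : T) :
  SIL e x y z -> vle e x z -> lk e x \subset lk e z :&: lk e y.
Proof.
move=> [_ _ _ [_ exz _] /= [xC _]] xz; apply/subsetP => v xv.
have zv : v \in lk e z.
  move: (subsetP xz v xv); rewrite !inE => /predU1P [vz|//].
  by move: xv exz; rewrite inE vz => ->.
rewrite inE zv /=; apply: contraR xC => yv.
set S := lk e x :&: lk e y.
have zC : z \in comp_of e S z by apply: comp_of_self; rewrite !inE (negbTE exz).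
have vC : v \in comp_of e S z.
  apply: comp_of_edge zC _ _; first by rewrite inE in zv.
  by rewrite inE negb_and yv orbT.
apply: comp_of_edge vC _ _; first by rewrite inE esym in xv.
by rewrite !inE eirr.
Qed.

End Components.

Theorem lemma3p12 (T : finType) (e : rel T) (x y z : T) :
  simple_graph e -> SIL e x y z -> vle e x z -> SIL e z y x.
Proof.
move=> [esym eirr] sil xz.
have isolated_x := comp_of_sub1 (SIL_lk_subset esym eirr sil xz).
case: sil => nxy nxz nyz [exy exz eyz] _.
have notin_comp w : w != x -> w \notin comp_of e (lk e z :&: lk e y) x.
  by move=> wx; apply/negP => /(subsetP isolated_x); rewrite inE (negbTE wx).
split; rewrite 1?eq_sym //; first by split; rewrite esym.
by split; apply: notin_comp; rewrite // eq_sym.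
Qed.
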